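(* Let $n\ge3$, $\boldsymbol\ell$ positive lengths, $\mu,\tau^*\in\mathbb{R}$, $N>0$ a smooth function on $T^n$ depending only on $s^1$, and $Z=z(s^1)\partial_{s^1}$ a smooth vector field. Consider the CTS-H$^{**}$ conformal data set $(g_{\boldsymbol\ell},\mu\sigma^\flat_{\boldsymbol\ell},\tau^*,Z,N)$. (1) If $\mu$ and $\tau^*$ are nonzero and have the same sign, then $\phi\equiv c=(\mu/\tau^* )^{1/q}$, $W=Z$ is a solution of the CTS-H$^{**}$ equations, and the generated solution of the constraint equations is $$\bar g=g_{r\boldsymbol\ell},\qquad \bar K=\bar\tau\,(r\ell_1)^2(ds^1)^2,\qquad \bar\tau=\tau^*+c^{-q}\tfrac1N\mathrm{div}_{g_{\boldsymbol\ell}}Z,\qquad r=c^{(q-2)/2}=(\mu/\tau^* )^{1/n}.$$ (2) If $\mu=\tau^*=0$, then for every $c>0$, $\phi\equiv c$, $W=Z$ is a solution of the CTS-H$^{**}$ equations, and the associated solution of the constraint equations is $\bar g=g_{r\boldsymbol\ell}$, $\bar K=\bar\tau(r\ell_1)^2(ds^1)^2$ with $\bar\tau=c^{-q}\frac1N\mathrm{div}_{g_{\boldsymbol\ell}}Z$ and $r=c^{(q-2)/2}$.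
   Context: $q=\frac{2n}{n-2}$, $\kappa=\frac{n-1}{n}$. $T^n=(\mathbb{R}/\mathbb{Z})^n$ with unit coordinates $(s^1,\ldots,s^n)$; $g_{\boldsymbol\ell}=\sum_k\ell_k^2(ds^k)^2$; $r\boldsymbol\ell=(r\ell_1,\ldots,r\ell_n)$; $\sigma^\flat_{\boldsymbol\ell}=\kappa\ell_1^2(ds^1)^2-\frac1n\sum_{k\ge2}\ell_k^2(ds^k)^2$ (transverse-traceless for $g_{\boldsymbol\ell}$). $\mathcal{L}_gW=L_Wg-\frac2n(\mathrm{div}_gW)g$. CTS-H$^{**}$ (drift-parameterized mean curvature) method: data $(g,\sigma,\tau^*,Z,N)$ with $\sigma$ transverse-traceless, $\tau^*$ constant, $Z$ a vector field (the drift), $N>0$. A solution of the CTS-H$^{**}$ equations is a pair $(\phi,W)$, $\phi>0$, $W$ a vector field, such that $$\bar g=\phi^{q-2}g,\qquad \bar K=\phi^{-2}\Big(\sigma+\tfrac1{2N}\mathcal{L}_gW\Big)+\frac{\tau^*+\frac{\phi^{-2q}}{N}\mathrm{div}_g(\phi^qZ)}{n}\bar g$$ solves the Einstein constraint equations $R_{\bar g}-|\bar K|^2+(\mathrm{tr}\bar K)^2=0$, $\mathrm{div}_{\bar g}\bar K=d\,\mathrm{tr}_{\bar g}\bar K$; this is the generated solution. *)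

(* Coordinates on T^n = (R/Z)^n are represented by points of 'rV[R]_n;
   fields on T^n are Z^n-torus_periodic fields on R^n written in the unit
   coordinates s = (s^1,...,s^n).  The coordinate s^1 is the index with
   value 0 in 'I_n. *)
From HB Require Import structures.
From mathcomp Require Import all_boot all_order all_algebra.
From mathcomp Require Import all_classical all_reals all_analysis.
Set Implicit Arguments. Unset Strict Implicit. Unset Printing Implicit Defensive.
Import Order.TTheory GRing.Theory Num.Theory.
Import numFieldNormedType.Exports.
Local Open Scope ring_scope.

Section Geometry.
Variables (R : realType) (n : nat).
Local Notation pt := 'rV[R]_n.

Definition qexp : R := 2 * n%:R / (n%:R - 2).
Definition kappa : R := (n%:R - 1) / n%:R.

Definition unitv (i : 'I_n) : pt := delta_mx 0 i.
Definition pd (i : 'I_n) (f : pt -> R) (x : pt) : R := 'D_(unitv i) f x.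

Definition is_first (i : 'I_n) : bool := (val i == 0)%N.
Definition s1 (x : pt) : R := \sum_(i < n | is_first i) x 0 i.

Definition torus_periodic (T : Type) (f : pt -> T) : Prop :=
  forall (x : pt) (i : 'I_n), f (x + unitv i) = f x.

Fixpoint smoothN (k : nat) (f : pt -> R) : Prop :=
  match k with
  | 0%N => True
  | k'.+1 => continuous f /\
       forall i : 'I_n, (forall x, derivable f x (unitv i)) /\ smoothN k' (pd i f)
  end.
Definition smooth (f : pt -> R) : Prop := forall k, smoothN k f.
Definition smooth_vf (W : pt -> pt) : Prop :=
  forall i : 'I_n, smooth (fun x => W x 0 i).

Definition s1_dependent (T : Type) (f : pt -> T) : Prop :=
  forall x y : pt, s1 x = s1 y -> f x = f y.

Definition ginv (g : pt -> 'M[R]_n) (x : pt) : 'M[R]_n := invmx (g x).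

Definition christ (g : pt -> 'M[R]_n) (x : pt) (k i j : 'I_n) : R :=
  2^-1 * \sum_(l < n) ginv g x k l *
    (pd i (fun y => g y j l) x + pd j (fun y => g y i l) x
     - pd l (fun y => g y i j) x).

Definition ricci (g : pt -> 'M[R]_n) (x : pt) (i j : 'I_n) : R :=
  \sum_(k < n) (pd k (fun y => christ g y k i j) x
                - pd j (fun y => christ g y k i k) x
                + \sum_(l < n) (christ g x k k l * christ g x l i j
                                - christ g x k j l * christ g x l i k)).

Definition scal (g : pt -> 'M[R]_n) (x : pt) : R :=
  \sum_(i < n) \sum_(j < n) ginv g x i j * ricci g x i j.

Definition divV (g : pt -> 'M[R]_n) (W : pt -> pt) (x : pt) : R :=
  \sum_(k < n) (pd k (fun y => W y 0 k) x
                + W x 0 k * \sum_(j < n) christ g x j j k).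

Definition lieg (g : pt -> 'M[R]_n) (W : pt -> pt) (x : pt) : 'M[R]_n :=
  \matrix_(i < n, j < n) \sum_(k < n)
     (W x 0 k * pd k (fun y => g y i j) x
      + g x k j * pd i (fun y => W y 0 k) x
      + g x i k * pd j (fun y => W y 0 k) x).

Definition CKO (g : pt -> 'M[R]_n) (W : pt -> pt) (x : pt) : 'M[R]_n :=
  lieg g W x - (2 / n%:R * divV g W x) *: g x.

Definition trK (g K : pt -> 'M[R]_n) (x : pt) : R :=
  \sum_(i < n) \sum_(j < n) ginv g x i j * K x i j.

Definition normsqK (g K : pt -> 'M[R]_n) (x : pt) : R :=
  \sum_(i < n) \sum_(j < n) \sum_(a < n) \sum_(b < n)
     ginv g x i a * ginv g x j b * K x i j * K x a b.

Definition divK (g K : pt -> 'M[R]_n) (x : pt) (j : 'I_n) : R :=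
  \sum_(i < n) \sum_(k < n) ginv g x i k *
     (pd k (fun y => K y i j) x
      - \sum_(l < n) (christ g x l k i * K x l j + christ g x l k j * K x i l)).

Definition constraints (g K : pt -> 'M[R]_n) : Prop :=
  (forall x, scal g x - normsqK g K x + (trK g K x) ^+ 2 = 0) /\
  (forall x j, divK g K x j = pd j (trK g K) x).

Definition cts_gbar (g : pt -> 'M[R]_n) (phi : pt -> R) (x : pt) : 'M[R]_n :=
  (phi x `^ (qexp - 2)) *: g x.

Definition cts_Kbar (g sigma : pt -> 'M[R]_n) (taus : R) (Z : pt -> pt)
    (N : pt -> R) (phi : pt -> R) (W : pt -> pt) (x : pt) : 'M[R]_n :=
  (phi x ^+ 2)^-1 *: (sigma x + (2 * N x)^-1 *: CKO g W x)
  + ((taus + (phi x `^ (2 * qexp))^-1 / N x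
               * divV g (fun y => (phi y `^ qexp) *: Z y) x) / n%:R)
    *: cts_gbar g phi x.

Definition cts_solution (g sigma : pt -> 'M[R]_n) (taus : R) (Z : pt -> pt)
    (N : pt -> R) (phi : pt -> R) (W : pt -> pt) : Prop :=
  (forall x, 0 < phi x) /\ torus_periodic phi /\ smooth phi /\
  torus_periodic W /\ smooth_vf W /\
  constraints (cts_gbar g phi) (cts_Kbar g sigma taus Z N phi W).

Definition gell (ell : 'I_n -> R) (x : pt) : 'M[R]_n :=
  \matrix_(i < n, j < n) (if i == j then ell i ^+ 2 else 0).

Definition sigflat (ell : 'I_n -> R) (x : pt) : 'M[R]_n :=
  \matrix_(i < n, j < n)
    (if i == j then (if is_first i then kappa * ell i ^+ 2
                     else - (n%:R^-1) * ell i ^+ 2) else 0).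

Definition rell (r : R) (ell : 'I_n -> R) : 'I_n -> R := fun i => r * ell i.

Definition ds1sq_tensor (t : pt -> R) (r : R) (ell : 'I_n -> R) (x : pt)
  : 'M[R]_n :=
  \matrix_(i < n, j < n)
    (if (i == j) && is_first i then t x * (r * ell i) ^+ 2 else 0).

End Geometry.
Arguments qexp R n : clear implicits.
Arguments kappa R n : clear implicits.

(** The data are invariant in the directions s^2, ..., s^n and g_ℓ is flat
    with constant coefficients, so for a constant conformal factor φ = c all
    Christoffel symbols vanish and ḡ = c^(q-2) g_ℓ = g_(rℓ) is flat again.
    With W = Z = z(s^1) ∂_(s^1) the conformal Killing operator only has a
    (ds^1)^2 part and a trace part; the relation μ = τ* c^q (which is how
    c = (μ/τ* )^(1/q) is chosen, and holds trivially when μ = τ* = 0) makes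
    the trace-free part μ σ^flat cancel everything but a multiple of (ds^1)^2.
    A tensor t(s^1) (rℓ_1)^2 (ds^1)^2 has trace t and squared norm t^2 for a
    flat metric, which gives the Hamiltonian constraint, and divergence dt,
    which gives the momentum constraint. *)
From HB Require Import structures.
From mathcomp Require Import all_boot all_order all_algebra.
From mathcomp Require Import all_classical all_reals all_analysis.
From mathcomp Require Import ring lra.
Set Implicit Arguments. Unset Strict Implicit. Unset Printing Implicit Defensive.
Import Order.TTheory GRing.Theory Num.Theory.
Import numFieldNormedType.Exports.
Local Open Scope ring_scope.

(* [big_only1] with the index type fixed to ['I_m], so that rewriting with it
   does not trigger costly unification of finType structures. *)
Lemma sum_ord_only1 (V : nmodType) (m : nat) (j : 'I_m) (F : 'I_m -> V) :
  (forall i : 'I_m, i != j -> F i = 0) -> \sum_(i < m) F i = F j.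
Proof. by move=> F0; rewrite (big_only1 j) // => i ij _; apply: F0. Qed.
Arguments sum_ord_only1 {V m} j {F}.

Section CoordinateDerivatives.
Variables (R : realType) (n : nat).
Local Notation pt := 'rV[R]_n.

Lemma derive_eq_increments (f g : pt -> R) (v x y : pt) :
  (forall h : R, f (h *: v + x) - f x = g (h *: v + y) - g y) ->
  'D_v f x = 'D_v g y.
Proof.
move=> fg; rewrite /derive.
suff -> : (fun h : R => h^-1 *: ((f \o shift x) (h *: v) - f x)) =
          (fun h : R => h^-1 *: ((g \o shift y) (h *: v) - g y)) by [].
by apply: funext => h /=; rewrite fg.
Qed.

Lemma pd_cst (i : 'I_n) (k : R) (x : pt) : pd i (fun _ : pt => k) x = 0.
Proof. exact: derive_cst. Qed.

Lemma pd_eq0_invariant (f : pt -> R) (i : 'I_n) (x : pt) :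
  (forall h : R, f (h *: unitv R i + x) = f x) -> pd i f x = 0.
Proof.
move=> fi; rewrite /pd (@derive_eq_increments f (cst (f x)) _ x x) ?derive_cst //.
by move=> h; rewrite fi.
Qed.

Lemma s1D (x y : pt) : s1 (x + y) = s1 x + s1 y.
Proof. by rewrite /s1 -big_split; apply: eq_bigr => i _; rewrite !mxE. Qed.

Lemma s1Z_unitv (i : 'I_n) (h : R) : ~~ is_first i -> s1 (h *: unitv R i) = 0.
Proof.
move=> i_nfirst; apply: big1 => j j_first; rewrite !mxE.
suff -> : (j == i) = false by rewrite andbF mulr0.
by apply/negbTE; apply: contraTneq j_first => ->.
Qed.

Lemma pd_s1_dependent (f : pt -> R) (i : 'I_n) (x : pt) :
  s1_dependent f -> ~~ is_first i -> pd i f x = 0.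
Proof.
move=> f_s1 i_nfirst; apply: pd_eq0_invariant => h; apply: f_s1.
by rewrite s1D s1Z_unitv // add0r.
Qed.

Lemma s1_dependent_pd (f : pt -> R) (i : 'I_n) :
  s1_dependent f -> s1_dependent (pd i f).
Proof.
move=> f_s1 x y xy; apply: derive_eq_increments => h.
by rewrite (f_s1 _ (h *: unitv R i + y)) ?(f_s1 x y) // !s1D xy.
Qed.

Lemma smooth_derivable (f : pt -> R) (i : 'I_n) (x : pt) :
  smooth f -> derivable f x (unitv R i).
Proof. by move=> f_smooth; case: (f_smooth 1%N) => _ /(_ i) [] /(_ x). Qed.

Lemma smooth_pd (f : pt -> R) (i : 'I_n) : smooth f -> smooth (pd i f).
Proof. by move=> f_smooth k; case: (f_smooth k.+1) => _ /(_ i) []. Qed.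

Lemma smooth_cst (c : R) : smooth (fun _ : pt => c).
Proof.
move=> k; elim: k c => // k IHk c; split; first exact: cst_continuous.
move=> i; split; first by move=> x; exact: derivable_cst.
suff -> : pd i (fun _ => c) = fun _ => 0 by [].
by apply: funext => x; exact: pd_cst.
Qed.

End CoordinateDerivatives.

Section ConstantMetric.
Variables (R : realType) (n : nat) (g : 'rV[R]_n -> 'M[R]_n).
Hypothesis g_cst : forall x y, g x = g y.

Lemma christ_cst x k i j : christ g x k i j = 0.
Proof.
have g_entry_cst a b : (fun y => g y a b) = fun _ => g x a b.
  by apply: funext => y; rewrite (g_cst y x).
rewrite /christ big1 ?mulr0 // => l _.
by rewrite !g_entry_cst !pd_cst addr0 subr0 mulr0.
Qed.

Lemma scal_cst x : scal g x = 0.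
Proof.
have christ_fun a b c : (fun y => christ g y a b c) = fun _ => 0.
  by apply: funext => y; rewrite christ_cst.
rewrite /scal big1 // => i _; rewrite big1 // => j _.
rewrite /ricci big1 ?mulr0 // => k _.
rewrite !christ_fun !pd_cst subrr add0r big1 // => l _.
by rewrite !christ_cst !mul0r subrr.
Qed.

Lemma divV_cst (W : 'rV[R]_n -> 'rV[R]_n) x :
  divV g W x = \sum_(k < n) pd k (fun y => W y 0 k) x.
Proof.
by apply: eq_bigr => k _; rewrite big1 ?mulr0 ?addr0 // => j _; rewrite christ_cst.
Qed.

End ConstantMetric.

Section FlatTorus.
Variables (R : realType) (n : nat) (i0 : 'I_n).
Hypothesis i0_first : is_first i0.
Local Notation pt := 'rV[R]_n.

Lemma is_firstE (i : 'I_n) : is_first i = (i == i0).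
Proof. by move: i0_first; rewrite /is_first => /eqP i00; rewrite -val_eqE i00. Qed.

Variables (ell : 'I_n -> R).
Hypothesis ell_neq0 : forall i, ell i != 0.

Lemma gell_cst (x y : pt) : gell ell x = gell ell y.
Proof. by []. Qed.

Lemma ginv_gell (x : pt) (i j : 'I_n) :
  ginv (gell ell) x i j = if i == j then (ell i ^+ 2)^-1 else 0.
Proof.
have gell_diag (l : 'I_n -> R) : gell l x = diag_mx (\row_i l i ^+ 2).
  by apply/matrixP => a b; rewrite !mxE; case: eqP.
have gell_inv : gell ell x *m gell (fun i => (ell i)^-1) x = 1%:M.
  rewrite !gell_diag mulmx_diag; apply/matrixP => a b; rewrite !mxE.
  by rewrite -exprMn mulfV // expr1n.
have [gell_unit _] := mulmx1_unit gell_inv.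
rewrite /ginv -[invmx _]mulmx1 -gell_inv mulKmx // mxE.
by case: eqP; rewrite ?exprVn.
Qed.

Lemma ds1sq_tensor1 (t : pt -> R) (x : pt) (i j : 'I_n) :
  ds1sq_tensor t 1 ell x i j =
  if (i == j) && (i == i0) then t x * ell i ^+ 2 else 0.
Proof. by rewrite mxE is_firstE mul1r. Qed.

Let K t := ds1sq_tensor t 1 ell.

Lemma ell_sq_neq0 (i : 'I_n) : ell i ^+ 2 != 0.
Proof. exact: expf_neq0. Qed.

Lemma trK_ds1sq (t : pt -> R) (x : pt) : trK (gell ell) (K t) x = t x.
Proof.
rewrite /trK (sum_ord_only1 i0) => [|i i_ne]; last first.
  by apply: big1 => j _; rewrite /K ds1sq_tensor1 (negbTE i_ne) andbF mulr0.
rewrite (sum_ord_only1 i0) => [|j j_ne]; last first.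
  by rewrite ginv_gell eq_sym (negbTE j_ne) mul0r.
by rewrite ginv_gell /K ds1sq_tensor1 !eqxx mulrCA mulVf ?mulr1 ?ell_sq_neq0.
Qed.

Lemma normsqK_ds1sq (t : pt -> R) (x : pt) :
  normsqK (gell ell) (K t) x = t x ^+ 2.
Proof.
have diag_only (i j : 'I_n) :
  \sum_(a < n) \sum_(b < n)
    ginv (gell ell) x i a * ginv (gell ell) x j b * K t x i j * K t x a b =
  ginv (gell ell) x i i * ginv (gell ell) x j j * K t x i j * K t x i j.
  rewrite (sum_ord_only1 i) => [|a a_ne]; last first.
    by apply: big1 => b _; rewrite (ginv_gell x i) eq_sym (negbTE a_ne) !mul0r.
  rewrite (sum_ord_only1 j) // => b b_ne.
  by rewrite (ginv_gell x j) eq_sym (negbTE b_ne) mulr0 !mul0r.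
rewrite /normsqK; under eq_bigr => i _ do under eq_bigr => j _ do rewrite diag_only.
rewrite (sum_ord_only1 i0) => [|i i_ne]; last first.
  by apply: big1 => j _; rewrite /K ds1sq_tensor1 (negbTE i_ne) andbF !mulr0.
rewrite (sum_ord_only1 i0) => [|j j_ne]; last first.
  by rewrite /K ds1sq_tensor1 eq_sym (negbTE j_ne) !mulr0.
rewrite ginv_gell /K ds1sq_tensor1 !eqxx /=.
by have := ell_sq_neq0 i0; move: (ell i0 ^+ 2) => e e0; field.
Qed.

Lemma divK_ds1sq (t : pt -> R) (x : pt) (j : 'I_n) :
  s1_dependent t -> derivable t x (unitv R i0) ->
  divK (gell ell) (K t) x j = pd j t x.
Proof.
move=> t_s1 t_der.
have divK_diag (i : 'I_n) :
  \sum_(k < n) ginv (gell ell) x i k *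
     (pd k (fun y => K t y i j) x -
      \sum_(l < n) (christ (gell ell) x l k i * K t x l j +
                    christ (gell ell) x l k j * K t x i l))
  = (ell i ^+ 2)^-1 * pd i (fun y => K t y i j) x.
  rewrite (sum_ord_only1 i) => [|k k_ne]; last first.
    by rewrite ginv_gell eq_sym (negbTE k_ne) mul0r.
  rewrite ginv_gell eqxx big1 ?subr0 // => l _.
  by rewrite !christ_cst // !mul0r addr0.
rewrite /divK; under eq_bigr => i _ do rewrite divK_diag.
have [->|j_ne] := eqVneq j i0; last first.
  rewrite pd_s1_dependent ?is_firstE //; apply: big1 => i _.
  suff -> : (fun y => K t y i j) = fun _ => 0 by rewrite pd_cst mulr0.
  apply: funext => y; rewrite /K ds1sq_tensor1.
  by case: eqP => [->|] //=; rewrite (negbTE j_ne).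
rewrite (sum_ord_only1 i0) => [|i i_ne]; last first.
  suff -> : (fun y => K t y i i0) = fun _ => 0 by rewrite pd_cst mulr0.
  by apply: funext => y; rewrite /K ds1sq_tensor1 (negbTE i_ne) andbF.
have -> : (fun y => K t y i0 i0) = (ell i0 ^+ 2) \*o t.
  by apply: funext => y; rewrite /K ds1sq_tensor1 eqxx mulrC.
by rewrite /pd deriveMl // mulKf ?ell_sq_neq0.
Qed.

Lemma constraints_ds1sq (t : pt -> R) :
  s1_dependent t -> (forall x, derivable t x (unitv R i0)) ->
  constraints (gell ell) (K t).
Proof.
move=> t_s1 t_der; have trK_t : trK (gell ell) (K t) = t.
  by apply: funext => x; exact: trK_ds1sq.
split=> [x|x j]; last by rewrite trK_t divK_ds1sq.
by rewrite (scal_cst gell_cst) normsqK_ds1sq trK_t sub0r addNr.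
Qed.

End FlatTorus.

Section DriftField.
Variables (R : realType) (n : nat) (i0 : 'I_n) (ell : 'I_n -> R).
Variable Z : 'rV[R]_n -> 'rV[R]_n.
Hypothesis i0_first : is_first i0.
Hypothesis Z_s1 : s1_dependent Z.
Hypothesis Z_along_s1 : forall x (i : 'I_n), ~~ is_first i -> Z x 0 i = 0.
Local Notation pt := 'rV[R]_n.
Local Notation dZ := (pd i0 (fun y => Z y 0 i0)).

Lemma pd_Z (x : pt) (i k : 'I_n) :
  pd i (fun y => Z y 0 k) x = if (i == i0) && (k == i0) then dZ x else 0.
Proof.
have [->|k_ne] := eqVneq k i0; last first.
  suff -> : (fun y => Z y 0 k) = fun _ => 0 by rewrite andbF pd_cst.
  by apply: funext => y; rewrite Z_along_s1 // (is_firstE i0_first).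
have [->//|i_ne] := eqVneq i i0.
rewrite pd_s1_dependent ?(is_firstE i0_first) // => a b ab.
by rewrite (Z_s1 ab).
Qed.

Lemma divV_Z (x : pt) : divV (gell ell) Z x = dZ x.
Proof.
rewrite divV_cst; last exact: gell_cst.
rewrite (sum_ord_only1 i0) => [|k k_ne]; first by rewrite pd_Z eqxx.
by rewrite pd_Z andbb (negbTE k_ne).
Qed.

Lemma divV_scaleZ (P : R) (x : pt) : smooth_vf Z ->
  divV (gell ell) (fun y => P *: Z y) x = P * divV (gell ell) Z x.
Proof.
move=> Z_smooth; rewrite !divV_cst ?mulr_sumr; try exact: gell_cst.
apply: eq_bigr => k _.
have -> : (fun y => (P *: Z y) 0 k) = P \*o (fun y => Z y 0 k).
  by apply: funext => y; rewrite mxE.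
by rewrite /pd deriveMl //; apply: smooth_derivable.
Qed.

Lemma lieg_Z (x : pt) :
  lieg (gell ell) Z x =
  \matrix_(i, j) (if (i == j) && (i == i0) then 2 * ell i0 ^+ 2 * dZ x else 0).
Proof.
apply/matrixP => i j; rewrite [RHS]mxE mxE !big_split /= big1 ?add0r => [|k _]; last first.
  by rewrite (_ : (fun y => gell ell y i j) = fun _ => gell ell x i j) // pd_cst mulr0.
rewrite (sum_ord_only1 j) => [|k k_ne]; last by rewrite mxE (negbTE k_ne) mul0r.
rewrite (sum_ord_only1 i) => [|k k_ne]; last by rewrite mxE eq_sym (negbTE k_ne) mul0r.
rewrite !mxE !eqxx (pd_Z x i j) (pd_Z x j i).
have [<-|i_ne_j] := eqVneq i j.
  by rewrite andbb; case: eqP => [->|_]; rewrite ?mulr0 ?addr0 //; ring.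
case: (eqVneq i i0) => [ei|]; case: (eqVneq j i0) => [ej|] /=; rewrite ?mulr0 ?addr0 //.
by move: i_ne_j; rewrite ei ej eqxx.
Qed.

End DriftField.

Lemma powR_half_sqr (R : realType) (c a : R) : 0 <= c -> (c `^ (a / 2)) ^+ 2 = c `^ a.
Proof. by move=> c_ge0; rewrite -powR_mulrn ?powR_ge0 // -powRrM divfK. Qed.

Section ConstantConformalFactor.
Variables (R : realType) (n : nat) (ell : 'I_n -> R) (c : R).
Hypothesis c_gt0 : 0 < c.
Local Notation q := (qexp R n).
Local Notation r := (c `^ ((q - 2) / 2)).

Lemma cts_gbar_cst : cts_gbar (gell ell) (fun _ => c) = gell (rell r ell).
Proof.
apply: funext => x; apply/matrixP => i j; rewrite !mxE.
case: eqP => _; last by rewrite mulr0.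
by rewrite /rell exprMn powR_half_sqr // ltW.
Qed.

Lemma ds1sq_tensor_rell (t : 'rV[R]_n -> R) :
  ds1sq_tensor t r ell = ds1sq_tensor t 1 (rell r ell).
Proof. by apply: funext => x; apply/matrixP => i j; rewrite !mxE mul1r. Qed.

Variables (i0 : 'I_n) (mu taus : R) (N : 'rV[R]_n -> R) (Z : 'rV[R]_n -> 'rV[R]_n).
Hypotheses (n_gt0 : (0 < n)%N) (i0_first : is_first i0).
Hypothesis mu_eq : mu = taus * c `^ q.
Hypothesis N_neq0 : forall x, N x != 0.
Hypotheses (Z_smooth : smooth_vf Z) (Z_s1 : s1_dependent Z).
Hypothesis Z_along_s1 : forall x (i : 'I_n), ~~ is_first i -> Z x 0 i = 0.

Lemma cts_Kbar_cst :
  cts_Kbar (gell ell) (fun x => mu *: sigflat ell x) taus Z N (fun _ => c) Z =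
  ds1sq_tensor (fun x => taus + (c `^ q)^-1 / N x * divV (gell ell) Z x) r ell.
Proof.
apply: funext => x; apply/matrixP => i j.
have n_neq0 : (n%:R : R) != 0 by rewrite pnatr_eq0 -lt0n.
have cq_neq0 : c `^ q != 0 by rewrite gt_eqF // powR_gt0.
have c2q : c `^ (2 * q) = (c `^ q) ^+ 2 by rewrite mulrC powRrM powR_mulrn ?powR_ge0.
have cq2 : c `^ (q - 2) = c `^ q / c ^+ 2.
  by rewrite powRB ?(gt_eqF c_gt0) ?implybT // powR_mulrn // ltW.
rewrite /cts_Kbar /cts_gbar /CKO (lieg_Z ell i0_first Z_s1 Z_along_s1) !mxE.
rewrite divV_scaleZ // !(divV_Z ell i0_first Z_s1 Z_along_s1) (is_firstE i0_first).
have [ij|i_ne_j] := eqVneq i j; last by rewrite /=; ring.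
subst j.
rewrite /= exprMn powR_half_sqr ?ltW // cq2 c2q mu_eq /kappa.
have N_x := N_neq0 x; have c_neq0 : c != 0 by rewrite gt_eqF.
by case: eqVneq => [->|_]; field; rewrite n_neq0 N_x c_neq0 cq_neq0.
Qed.

Hypotheses (N_smooth : smooth N) (N_s1 : s1_dependent N) (Z_periodic : torus_periodic Z).
Hypothesis ell_neq0 : forall i, ell i != 0.

Lemma taubar_derivable (P : R) (x : 'rV[R]_n) :
  derivable (fun y => taus + P / N y * divV (gell ell) Z y) x (unitv R i0).
Proof.
have -> : (fun y => taus + P / N y * divV (gell ell) Z y) =
    cst taus + (cst P * (fun y => (N y)^-1)) * pd i0 (fun y => Z y 0 i0).
  by apply: funext => y; rewrite /= (divV_Z ell i0_first Z_s1 Z_along_s1).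
apply: derivableD; first exact: derivable_cst.
apply: derivableM; last exact/smooth_derivable/smooth_pd.
apply: derivableM; first exact: derivable_cst.
by apply: derivableV; [exact: N_neq0 | exact: smooth_derivable].
Qed.

Lemma taubar_s1_dependent (P : R) :
  s1_dependent (fun y => taus + P / N y * divV (gell ell) Z y).
Proof.
have Z1_s1 : s1_dependent (fun y => Z y 0 i0) by move=> a b ab; rewrite (Z_s1 ab).
move=> x y xy; rewrite !(divV_Z ell i0_first Z_s1 Z_along_s1) (N_s1 xy).
by rewrite (s1_dependent_pd _ Z1_s1 xy).
Qed.

Lemma cts_solution_cst :
  cts_solution (gell ell) (fun x => mu *: sigflat ell x) taus Z N (fun _ => c) Z.
Proof.
split=> [_|]; first exact: c_gt0.
split=> //; split; first exact: smooth_cst.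
do 2 split=> //.
rewrite cts_gbar_cst cts_Kbar_cst ds1sq_tensor_rell.
apply: (constraints_ds1sq i0_first); last by move=> x; apply: taubar_derivable.
- by move=> i; rewrite /rell mulf_neq0 // gt_eqF // powR_gt0.
- exact: taubar_s1_dependent.
Qed.

Lemma cts_generated_cst :
  cts_solution (gell ell) (fun x => mu *: sigflat ell x) taus Z N (fun _ => c) Z /\
  cts_gbar (gell ell) (fun _ => c) = gell (rell r ell) /\
  cts_Kbar (gell ell) (fun x => mu *: sigflat ell x) taus Z N (fun _ => c) Z =
  ds1sq_tensor (fun x => taus + (c `^ q)^-1 / N x * divV (gell ell) Z x) r ell.
Proof. by rewrite cts_gbar_cst cts_Kbar_cst; split=> //; exact: cts_solution_cst. Qed.

End ConstantConformalFactor.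

Theorem proposition7p3 (R : realType) (n : nat) (ell : 'I_n -> R)
    (mu taus : R) (N : 'rV[R]_n -> R) (Z : 'rV[R]_n -> 'rV[R]_n) :
  (3 <= n)%N ->
  (forall i, 0 < ell i) ->
  torus_periodic N -> smooth N -> (forall x, 0 < N x) -> s1_dependent N ->
  torus_periodic Z -> smooth_vf Z -> s1_dependent Z ->
  (forall x (i : 'I_n), ~~ is_first i -> Z x 0 i = 0) ->
  let g := gell ell in
  let sigma := fun x => mu *: sigflat ell x in
  ((((0 < mu) && (0 < taus)) || ((mu < 0) && (taus < 0))) ->
     let c := (mu / taus) `^ (1 / qexp R n) in
     let r := c `^ ((qexp R n - 2) / 2) in
     let taubar := fun x => taus + (c `^ (qexp R n))^-1 / N x * divV g Z x in
     cts_solution g sigma taus Z N (fun _ => c) Z /\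
     r = (mu / taus) `^ (1 / n%:R) /\
     cts_gbar g (fun _ => c) = gell (rell r ell) /\
     cts_Kbar g sigma taus Z N (fun _ => c) Z = ds1sq_tensor taubar r ell) /\
  (mu = 0 -> taus = 0 ->
   forall c : R, 0 < c ->
     let r := c `^ ((qexp R n - 2) / 2) in
     let taubar := fun x => (c `^ (qexp R n))^-1 / N x * divV g Z x in
     cts_solution g sigma taus Z N (fun _ => c) Z /\
     cts_gbar g (fun _ => c) = gell (rell r ell) /\
     cts_Kbar g sigma taus Z N (fun _ => c) Z = ds1sq_tensor taubar r ell).
Proof.
move=> n_ge3 ell_gt0 _ N_smooth N_gt0 N_s1 Z_periodic Z_smooth Z_s1 Z_along_s1 g sigma.
have n_gt0 : (0 < n)%N by apply: leq_trans n_ge3.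
have i0_first : is_first (Ordinal n_gt0) by [].
have ell_neq0 i : ell i != 0 by rewrite gt_eqF.
have N_neq0 x : N x != 0 by rewrite gt_eqF.
have generated c (c_gt0 : 0 < c) (mu_eq : mu = taus * c `^ qexp R n) :=
  cts_generated_cst c_gt0 n_gt0 i0_first mu_eq N_neq0 Z_smooth Z_s1 Z_along_s1
    N_smooth N_s1 Z_periodic ell_neq0.
split=> [sign_eq c r taubar | mu0 taus0 c c_gt0 r taubar].
  have mu_taus_gt0 : 0 < mu / taus.
    by case/orP: sign_eq => /andP[? ?]; [exact: divr_gt0 | rewrite -divrNN divr_gt0 ?oppr_gt0].
  have taus_neq0 : taus != 0.
    by case/orP: sign_eq => /andP[_ ?]; [rewrite gt_eqF | rewrite lt_eqF].
  have n_ge3R : (3 : R) <= n%:R by rewrite ler_nat.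
  have q_neq0 : qexp R n != 0 by rewrite /qexp !mulf_neq0 ?invr_eq0 //; apply/eqP; lra.
  have cq : c `^ qexp R n = mu / taus by rewrite -powRrM div1r mulVf ?powRr1 ?ltW.
  have mu_eq : mu = taus * c `^ qexp R n by rewrite cq mulrC divfK.
  have [solution [gbar Kbar]] := generated c (powR_gt0 _ mu_taus_gt0) mu_eq.
  do !split=> //; rewrite /r /c -powRrM /qexp; congr (_ `^ _).
  by field; apply/andP; split; apply/eqP; lra.
have mu_eq : mu = taus * c `^ qexp R n by rewrite mu0 taus0 mul0r.
have [solution [gbar Kbar]] := generated c c_gt0 mu_eq.
do !split=> //; rewrite Kbar; congr ds1sq_tensor.
by apply: funext => x; rewrite taus0 add0r.
Qed.
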